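(* Let $F$ be a field of characteristic zero and $n$ a natural number. There is no nonzero element $l\in W(n,0)$ such that every basis element $b\in\{e^{a_1x_1}\cdots e^{a_nx_n}x_1^{b_1}\cdots x_n^{b_n}\partial_i: a_j,b_j\in\mathbb Z,1\le i\le n\}$ is an eigenvector of $\mathrm{ad}\,l$ (i.e. $[b,l]\in Fb$ for all such $b$).
   Context: $W(n,0)$ is the Lie algebra with basis $e^{\alpha}x^{\beta}\partial_i$ ($\alpha,\beta\in\mathbb Z^n$, $1\le i\le n$), realized as vector fields $f\partial_i$ with $f$ in the commutative algebra with basis $e^{\alpha}x^{\beta}$ (multiplication adding exponents), $\partial_i(e^{\alpha}x^{\beta})=a_ie^{\alpha}x^{\beta}+b_ie^{\alpha}x^{\beta-\epsilon_i}$, and bracket $[f\partial_i,g\partial_j]=f\partial_i(g)\partial_j-g\partial_j(f)\partial_i$. *)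

From HB Require Import structures.
From mathcomp Require Import all_boot all_order all_algebra.
From mathcomp Require Import finmap.
Set Implicit Arguments. Unset Strict Implicit. Unset Printing Implicit Defensive.
Import Order.TTheory GRing.Theory Num.Theory.
Local Open Scope ring_scope.


Definition zvec (n : nat) := {ffun 'I_n -> int}.

(* Index of the basis element e^alpha x^beta d_i : (alpha, beta, i). *)
Definition Wbas (n : nat) := (zvec n * zvec n * 'I_n)%type.

Definition zadd n (a b : zvec n) : zvec n := [ffun k => a k + b k].
Definition zsub n (a b : zvec n) : zvec n := [ffun k => a k - b k].
Definition zeps n (i : 'I_n) : zvec n := [ffun k => ((k == i) : nat)%:Z].

Definition W (n : nat) (F : fieldType) := {fsfun Wbas n -> F with 0}.

Definition delta n (F : fieldType) (b d : Wbas n) : F := (d == b)%:R.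

(* With f = e^a x^b, g = e^c x^e:
   [f d_i, g d_j] = f d_i(g) d_j - g d_j(f) d_i, where
   d_i(e^c x^e) = c_i e^c x^e + e_i e^c x^(e - eps_i), and multiplication
   adds exponents. *)
Definition brk_basis n (F : fieldType) (b c : Wbas n) : Wbas n -> F :=
  let: (a, be, i) := b in
  let: (g, de, j) := c in
  fun d =>
    (g i)%:~R * delta F (zadd a g, zadd be de, j) d
  + (de i)%:~R * delta F (zadd a g, zsub (zadd be de) (zeps i), j) d
  - (a j)%:~R * delta F (zadd a g, zadd be de, i) d
  - (be j)%:~R * delta F (zadd a g, zsub (zadd be de) (zeps j), i) d.

Definition ad_basis n (F : fieldType) (b : Wbas n) (l : W n F) : Wbas n -> F :=
  fun d => \sum_(c <- (finsupp l : seq _)) l c * brk_basis F b c d.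

Definition eigen_basis n (F : fieldType) (l : W n F) (b : Wbas n) : Prop :=
  exists lam : F, forall d, ad_basis b l d = lam * delta F b d.

From HB Require Import structures.
From mathcomp Require Import all_boot all_order all_algebra.
From mathcomp Require Import finmap.
Set Implicit Arguments. Unset Strict Implicit. Unset Printing Implicit Defensive.
Import GRing.Theory Num.Theory.
Local Open Scope ring_scope.

(* Write l = sum l(g,D,k) e^g x^D d_k.  For b = d_i the eigen condition, read off
   the diagonal, is the recursion g_i l(g,D,k) + (D_i + 1) l(g,D+eps_i,k) = 0 for
   (g,D,k) <> (0,0,i), whose integer coefficients are nonzero in characteristic
   zero.  If g_i <> 0, a nonzero l(g,D,k) forces l(g,D+m eps_i,k) <> 0 for all m,
   against finite support; so only g = 0 occurs, and the recursion taken at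
   D - eps_i leaves only d_k and x_k d_k.  These last coefficients are killed by
   the eigen conditions of x_k d_k at d_k and of e^(x_k) d_k at e^(x_k) x_k d_k. *)

Lemma eqr_addl_sub (V : zmodType) (x a y : V) : (x == a + y) = (y == x - a).
Proof. by rewrite [y == _]eq_sym subr_eq addrC. Qed.

Lemma eqr_addl_subB (V : zmodType) (x a y e : V) : (x == a + y - e) = (y == x + e - a).
Proof. by rewrite eq_sym subr_eq eq_sym eqr_addl_sub. Qed.

Definition graph_seq (I : finType) (X : Type) (f : I -> X) : seq (X * I) :=
  [seq (f j, j) | j <- index_enum I].

Lemma graph_seq_uniq (I : finType) (X : eqType) (f : I -> X) : uniq (graph_seq f).
Proof.
by rewrite map_inj_uniq ?index_enum_uniq // => j1 j2 [].
Qed.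

Lemma mem_graph_seq (I : finType) (X : eqType) (f : I -> X) (c : X * I) :
  (c \in graph_seq f) = (c.1 == f c.2).
Proof.
case: c => x j; apply/mapP/eqP => [[j' _ [-> ->]] // | /= ->].
by exists j; rewrite ?mem_index_enum.
Qed.

Lemma exists_inj_notin (T : eqType) (f : nat -> T) (s : seq T) :
  injective f -> exists m, f m \notin s.
Proof.
move=> f_inj; have : ~~ all [in s] (map f (iota 0 (size s).+1)).
  apply/negP => /allP sub.
  have := uniq_leq_size _ sub; rewrite map_inj_uniq // iota_uniq => /(_ isT).
  by rewrite size_map size_iota ltnn.
by case/allPn => _ /mapP[m _ ->] fm; exists m.
Qed.

Lemma sum_finsupp_indicator (R : pzSemiRingType) (T : choiceType)
    (l : {fsfun T -> R with 0}) (w : T -> R) (P : pred T) (s : seq T) :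
  uniq s -> (forall c, P c = (c \in s)) ->
  \sum_(c <- finsupp l) l c * (w c * (P c)%:R) = \sum_(c <- s) l c * w c.
Proof.
move=> s_uniq Ps.
rewrite [RHS](bigID [in finsupp l]) /= [X in _ + X]big1 ?addr0; last first.
  by move=> c /fsfun_dflt ->; rewrite mul0r.
transitivity (\sum_(c <- finsupp l | P c) l c * w c).
  rewrite [RHS]big_mkcond; apply: eq_bigr => c _.
  by case: (P c); rewrite ?mulr1 ?mulr0.
have supp_perm : perm_eq [seq c <- finsupp l | P c] [seq c <- s | c \in finsupp l].
  apply: uniq_perm; rewrite ?filter_uniq ?fset_uniq // => c.
  by rewrite !mem_filter -(Ps c) andbC.
by rewrite -[LHS]big_filter -[RHS]big_filter (perm_big _ supp_perm).
Qed.

Section StructureConstants.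
Variables (F : fieldType) (n : nat).

Lemma zaddE (a b : zvec n) : zadd a b = a + b.
Proof. by apply/ffunP => k; rewrite !ffunE. Qed.

Lemma zsubE (a b : zvec n) : zsub a b = a - b.
Proof. by apply/ffunP => k; rewrite !ffunE. Qed.

Lemma zeps_id (i : 'I_n) : zeps i i = 1.
Proof. by rewrite ffunE eqxx. Qed.

Lemma intr_zeps (i j : 'I_n) : (zeps i j)%:~R = (j == i)%:R :> F.
Proof. by rewrite ffunE; case: eqP. Qed.

Lemma zvec0E (j : 'I_n) : (0 : zvec n) j = 0.
Proof. by rewrite ffunE. Qed.

Lemma zeps_neq0 (i : 'I_n) : zeps i != 0.
Proof. by apply/eqP => /(congr1 (fun v : zvec n => v i)); rewrite zeps_id ffunE. Qed.

Lemma sum_zeps (f : 'I_n -> F) (i : 'I_n) :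
  \sum_(j < n) (zeps i j)%:~R * f j = f i.
Proof.
rewrite (bigD1 i) //= big1 ?addr0 => [|j ji]; rewrite intr_zeps ?eqxx ?mul1r //.
by rewrite (negPf ji) mul0r.
Qed.

Lemma ad_basisE (a be : zvec n) (i : 'I_n) (l : W n F) (h E : zvec n) (k : 'I_n) :
  ad_basis (a, be, i) l (h, E, k) =
    (h i - a i)%:~R * l (h - a, E - be, k)
  + (E i + 1 - be i)%:~R * l (h - a, E + zeps i - be, k)
  - (k == i)%:R * \sum_(j < n) ((a j)%:~R * l (h - a, E - be, j)
                              + (be j)%:~R * l (h - a, E + zeps j - be, j)).
Proof.
pose S w (P : pred (Wbas n)) := \sum_(c <- finsupp l) l c * (w c * (P c)%:R).
have SE w P s : uniq s -> (forall c, P c = (c \in s)) ->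
    S w P = \sum_(c <- s) l c * w c.
  exact: sum_finsupp_indicator.
transitivity (
    S (fun c => (c.1.1 i)%:~R) (fun c => (h, E, k) == (a + c.1.1, be + c.1.2, c.2))
  + S (fun c => (c.1.2 i)%:~R)
      (fun c => (h, E, k) == (a + c.1.1, be + c.1.2 - zeps i, c.2))
  - S (fun c => (a c.2)%:~R) (fun c => (h, E, k) == (a + c.1.1, be + c.1.2, i))
  - S (fun c => (be c.2)%:~R)
      (fun c => (h, E, k) == (a + c.1.1, be + c.1.2 - zeps c.2, i))).
  rewrite /ad_basis /S -big_split -!sumrB; apply: eq_bigr => -[[g de] j] _.
  by rewrite /= /delta !zaddE !zsubE !mulrDr !mulrN.
rewrite (SE _ _ [:: (h - a, E - be, k)]); first last.
- move=> [[g de] j]; rewrite /= inE !xpair_eqE.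
  by rewrite (eqr_addl_sub h) (eqr_addl_sub E) [k == _]eq_sym.
- by [].
rewrite (SE _ _ [:: (h - a, E + zeps i - be, k)]); first last.
- move=> [[g de] j]; rewrite /= inE !xpair_eqE.
  by rewrite (eqr_addl_sub h) eqr_addl_subB [k == _]eq_sym.
- by [].
rewrite !big_seq1 /= [(h - a) i]ffunE [(E + zeps i - be) i]ffunE [(E + zeps i) i]ffunE.
rewrite [(- a) i]ffunE [(- be) i]ffunE zeps_id ![l _ * _]mulrC.
rewrite -addrA -opprD; congr (_ - _).
case: (eqVneq k i) => [<- | ki]; last first.
  rewrite mul0r /S !big1 ?addr0 // => -[[g de] j] _;
  by rewrite /= !xpair_eqE (negPf ki) andbF !mulr0.
rewrite (SE _ _ (graph_seq (fun=> (h - a, E - be)))); first last.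
- move=> [[g de] j]; rewrite mem_graph_seq /= !xpair_eqE.
  by rewrite (eqr_addl_sub h) (eqr_addl_sub E) (eqxx k) andbT.
- exact: graph_seq_uniq.
rewrite (SE _ _ (graph_seq (fun j => (h - a, E + zeps j - be)))); first last.
- move=> [[g de] j]; rewrite mem_graph_seq /= !xpair_eqE.
  by rewrite (eqr_addl_sub h) eqr_addl_subB (eqxx k) andbT.
- exact: graph_seq_uniq.
rewrite !big_map mul1r -big_split; apply: eq_bigr => j _.
by rewrite /= !(mulrC (l _)).
Qed.

End StructureConstants.

Section EigenBasis.
Variables (F : fieldType) (n : nat).
Hypothesis char0 : [pchar F] =i pred0.

Lemma intr_eq0_char0 (z : int) : (z%:~R == 0 :> F) = (z == 0).
Proof.
have natr_eq0 := (pcharf0P F).1 char0.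
by case: z => m; rewrite ?NegzE ?mulrNz ?oppr_eq0 -pmulrn natr_eq0.
Qed.

Variable l : W n F.
Hypothesis l_eigen : forall b, eigen_basis l b.

Lemma ad_basis_offdiag (b d : Wbas n) : d != b -> ad_basis b l d = 0.
Proof.
by move=> db; have [lam ->] := l_eigen b; rewrite /delta (negPf db) mulr0.
Qed.

Lemma coef_shift (i k : 'I_n) (g D : zvec n) : (g, D, k) != (0, 0, i) ->
  (g i)%:~R * l (g, D, k) + (D i + 1)%:~R * l (g, D + zeps i, k) = 0.
Proof.
move=> /ad_basis_offdiag; rewrite ad_basisE big1 ?mulr0 ?subr0 => [|j _].
  by rewrite zvec0E !subr0.
by rewrite zvec0E !mul0r addr0.
Qed.

Lemma supp_exp_eq0 (g D : zvec n) (k : 'I_n) : l (g, D, k) != 0 -> g = 0.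
Proof.
move=> lgDk; apply/ffunP => i; rewrite zvec0E; apply/eqP/contraT => gi.
have shift_ne0 m : l (g, D + zeps i *+ m, k) != 0.
  elim: m => [|m IHm]; first by rewrite addr0.
  have ne0 : (g, D + zeps i *+ m, k) != (0, 0, i).
    by apply: contra gi => /eqP[-> _ _]; rewrite zvec0E.
  apply: contra IHm; rewrite mulrSr addrA => /eqP lm0.
  have := coef_shift ne0; rewrite lm0 mulr0 addr0 => /eqP.
  by rewrite mulf_eq0 intr_eq0_char0 (negPf gi).
have shift_inj : injective (fun m => (g, D + zeps i *+ m, k)).
  move=> m1 m2 [/(congr1 (fun v : zvec n => v i))].
  by rewrite !ffunE !ffunMnE zeps_id => /addrI /eqP; rewrite eqr_nat => /eqP.
have [m] := exists_inj_notin (finsupp l) shift_inj.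
by rewrite mem_finsupp shift_ne0.
Qed.

Lemma supp_poly_eq0_or_eps (D : zvec n) (k : 'I_n) :
  l (0, D, k) != 0 -> D = 0 \/ D = zeps k.
Proof.
move=> lDk.
have Di i : D i = 0 \/ (D = zeps i /\ k = i).
  case: (eqVneq ((0, D - zeps i, k) : Wbas n) (0, 0, i)) => [[DE ->] | ne0].
    by right; split=> //; apply/eqP; rewrite -subr_eq0 DE.
  left; apply/eqP; have := coef_shift ne0.
  rewrite subrK !ffunE eqxx subrK mul0r add0r => /eqP.
  by rewrite mulf_eq0 (negPf lDk) orbF intr_eq0_char0.
have [-> | DNk] := eqVneq D (zeps k); [by right | left].
apply/ffunP => i; rewrite zvec0E; case: (Di i) => // -[DE ki].
by move: DNk; rewrite DE ki eqxx.
Qed.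

Lemma coef_const_eq0 (k : 'I_n) : l (0, 0, k) = 0.
Proof.
have ne : ((0, 0, k) : Wbas n) != (0, zeps k, k).
  by rewrite !xpair_eqE eq_sym (negPf (zeps_neq0 k)) andbF.
have := ad_basis_offdiag ne; rewrite ad_basisE eqxx mul1r.
rewrite !zvec0E zeps_id !subrr !addrK mulr0z !mul0r add0r.
under eq_bigr do rewrite zvec0E mulr0z mul0r !add0r.
by rewrite sum_zeps subrr sub0r => /eqP; rewrite oppr_eq0 => /eqP.
Qed.

Lemma coef_linear_eq0 (k : 'I_n) : l (0, zeps k, k) = 0.
Proof.
have l_eps2 : l (0, zeps k + zeps k, k) = 0.
  have ne0 : ((0, zeps k, k) : Wbas n) != (0, 0, k).
    by rewrite !xpair_eqE (negPf (zeps_neq0 k)) andbF.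
  have := coef_shift ne0; rewrite zvec0E mul0r add0r zeps_id => /eqP.
  by rewrite mulf_eq0 intr_eq0_char0 => /orP[// | /eqP].
have ne : ((zeps k, zeps k, k) : Wbas n) != (zeps k, 0, k).
  by rewrite !xpair_eqE (negPf (zeps_neq0 k)) andbF.
have := ad_basis_offdiag ne; rewrite ad_basisE eqxx mul1r.
rewrite !subrr !zvec0E !subr0 zeps_id mulr0z mul0r add0r l_eps2 mulr0 add0r.
under eq_bigr do rewrite zvec0E mulr0z mul0r addr0.
by rewrite sum_zeps => /eqP; rewrite oppr_eq0 => /eqP.
Qed.

Lemma eigen_basis_coef_eq0 (d : Wbas n) : l d = 0.
Proof.
case: d => [[g D] k]; apply/eqP/contraT => lgDk.
have g0 := supp_exp_eq0 lgDk; rewrite g0 in lgDk.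
have [D0 | Deps] := supp_poly_eq0_or_eps lgDk.
  by rewrite D0 coef_const_eq0 eqxx in lgDk.
by rewrite Deps coef_linear_eq0 eqxx in lgDk.
Qed.

End EigenBasis.

Theorem corollary1 (F : fieldType) (n : nat) :
  [pchar F] =i pred0 ->
  ~ (exists l : W n F, (exists d : Wbas n, l d != 0) /\ forall b : Wbas n, eigen_basis l b).
Proof.
move=> char0 [l [[d ld] l_eigen]].
by rewrite (eigen_basis_coef_eq0 char0 l_eigen) eqxx in ld.
Qed.
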